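(* Define $\mathrm{CS}:Q\to\mathbb{R}$ by $\mathrm{CS}(q)=\int_{p(q)/q}^{1}(vq-p(q))f(v)\,dv$. Then $\mathrm{CS}$ is convex on $Q$ if and only if \[ r(v)r''(v)+r'(v)\le 1 \quad\text{for all } v\in\big(\overline p(q_h),\overline p(q_\ell)\big). \]
   Context: Let $0<q_\ell<q_h<\infty$, $Q=[q_\ell,q_h]$, and let $c$ be a real number with $0<c<q_\ell$. Let $F$ be a probability distribution on $[0,1]$ with support $[0,1]$ admitting a twice continuously differentiable density $f:(0,1)\to\mathbb{R}_{>0}$. Define $r(v)=(1-F(v))/f(v)$ and $\psi(v)=v-r(v)$ on $(0,1)$, and assume $\psi'(v)>0$ whenever $\psi(v)>0$. For $q\in Q$, $p(q)$ is the unique maximizer over $p\in\mathbb{R}$ of $(p-c)\big(1-F(p/q)\big)$, and $\overline p(q)=p(q)/q$. *)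

From Stdlib Require Import Reals.
From Coquelicot Require Import Coquelicot.
Open Scope R_scope.

Definition rfun (F f : R -> R) (v : R) : R := (1 - F v) / f v.

Definition psi (F f : R -> R) (v : R) : R := v - rfun F f v.

Definition profit (F : R -> R) (c q p : R) : R := (p - c) * (1 - F (p / q)).

(* CS(q) = int_{p(q)/q}^{1} (v q - p(q)) f(v) dv, as a (possibly improper at 1)
   Riemann integral *)
Definition CS (f p : R -> R) (q : R) : R :=
  RInt_gen (fun v => (v * q - p q) * f v) (at_point (p q / q)) (at_left 1).

From Stdlib Require Import Reals Lra.
From Coquelicot Require Import Coquelicot.
Open Scope R_scope.

(* Write w = p(q)/q for the optimal price ratio. The first-order condition of the monopoly
   problem is psi(w) = c/q, and since psi increases wherever it is positive, q = c/psi(w) is a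
   decreasing change of variable between [pbar(q_h), pbar(q_l)] and [q_l, q_h]. Integrating by
   parts, CS(q) = q * int_w^1 (1 - F). By Cauchy's mean value theorem every chord slope of CS
   equals H(xi) at some intermediate ratio xi, where
   H(w) = int_w^1 (1 - F) + psi(w) (1 - F(w)) / psi'(w) is dCS/dq at ratio w; so CS is convex
   exactly when H is nonincreasing in w. Finally H' = psi f / psi'^2 * (r r'' + r' - 1). *)

Lemma is_derive_pos_gt_right (g : R -> R) (x D : R) :
  is_derive g x D -> 0 < D ->
  forall d, 0 < d -> exists y, x < y < x + d /\ g x < g y.
Proof.
  intros Hg HD d Hd. apply is_derive_Reals in Hg.
  destruct (Hg (D / 2)) as [del Hdel]; [lra|].
  pose proof (cond_pos del) as Hdel0.
  set (h := Rmin del d / 2).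
  assert (Hh : 0 < h < Rmin del d) by (unfold h; pose proof (Rmin_pos del d); lra).
  pose proof (Rmin_l del d); pose proof (Rmin_r del d).
  exists (x + h). split; [lra|].
  assert (Hq : Rabs ((g (x + h) - g x) / h - D) < D / 2).
  { apply Hdel; [lra|]. rewrite Rabs_pos_eq; lra. }
  apply Rabs_def2 in Hq.
  set (Q := (g (x + h) - g x) / h) in Hq.
  assert (g (x + h) - g x = Q * h) by (unfold Q; field; lra).
  nra.
Qed.

Lemma is_derive_local_max (g : R -> R) (a b x D : R) :
  a < x < b -> is_derive g x D -> (forall y, a < y < b -> g y <= g x) -> D = 0.
Proof.
  intros Hx Hg Hmax. apply is_derive_Reals in Hg.
  exact (deriv_maximum g a b x (exist _ D Hg) (proj1 Hx) (proj2 Hx)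
           (fun y Hay Hyb => Hmax y (conj Hay Hyb))).
Qed.

Lemma derive_nonpos_of_nonincreasing (h : R -> R) (a b x D : R) :
  a < x < b -> is_derive h x D ->
  (forall y z, a < y -> y < z -> z < b -> h z <= h y) -> D <= 0.
Proof.
  intros Hx Hh Hdecr. apply Rnot_lt_le. intros HD.
  destruct (is_derive_pos_gt_right h x D Hh HD (b - x)) as [y [Hy Hgt]]; [lra|].
  pose proof (Hdecr x y ltac:(lra) ltac:(lra) ltac:(lra)). lra.
Qed.

Lemma nonincreasing_of_derive_nonpos (h dh : R -> R) (a b : R) :
  (forall x, a < x < b -> is_derive h x (dh x)) -> (forall x, a < x < b -> dh x <= 0) ->
  forall y z, a < y -> y < z -> z < b -> h z <= h y.
Proof.
  intros Hh Hdh y z Hy Hyz Hz.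
  destruct (MVT_cor2 h dh y z Hyz) as [xi [Hmvt Hxi]].
  { intros x Hx. apply is_derive_Reals, Hh. lra. }
  assert (dh xi <= 0) by (apply Hdh; lra). nra.
Qed.

Lemma lt_of_derive_pos_above (g dg : R -> R) (a b : R) :
  a < b -> (forall x, a <= x <= b -> is_derive g x (dg x)) ->
  (forall x, a <= x < b -> g a <= g x -> 0 < dg x) -> g a < g b.
Proof.
  intros Hab Hg Hdg.
  (* a maximiser of g on [a, b] lying in [a, b) would see g increase to its right *)
  assert (Hnomax : forall m, a <= m < b -> g a <= g m -> exists y, a <= y <= b /\ g m < g y).
  { intros m Hm Ham.
    destruct (is_derive_pos_gt_right g m (dg m) (Hg m ltac:(lra)) (Hdg m Hm Ham) (b - m))
      as [y [Hy Hgy]]; [lra|].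
    exists y. split; [lra | exact Hgy]. }
  destruct (continuity_ab_maj g a b) as [m [Hm Hmab]]; [lra| |].
  { intros x Hx. apply continuity_pt_filterlim, (ex_derive_continuous g x).
    eexists. apply Hg, Hx. }
  apply Rnot_le_lt. intros Hba.
  destruct (Req_dec m b) as [->|Hmb].
  - destruct (Hnomax a ltac:(lra) (Rle_refl _)) as [y [Hy Hay]].
    pose proof (Hm y Hy). lra.
  - destruct (Hnomax m ltac:(lra) (Hm a ltac:(lra))) as [y [Hy Hmy]].
    pose proof (Hm y Hy). lra.
Qed.

Lemma continuous_le_of_near (h : R -> R) (x C : R) :
  continuous h x -> (forall d, 0 < d -> exists y, Rabs (y - x) < d /\ h y <= C) -> h x <= C.
Proof.
  intros Hh Hnear. apply Rnot_lt_le. intros HC.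
  destruct (proj1 (filterlim_locally h (h x)) Hh (mkposreal _ (proj2 (Rlt_0_minus _ _) HC)))
    as [d Hd].
  destruct (Hnear d (cond_pos d)) as [y [Hy HyC]].
  specialize (Hd y Hy). change (Rabs (h y - h x) < h x - C) in Hd.
  apply Rabs_def2 in Hd. lra.
Qed.

Lemma continuous_ge_of_near (h : R -> R) (x C : R) :
  continuous h x -> (forall d, 0 < d -> exists y, Rabs (y - x) < d /\ C <= h y) -> C <= h x.
Proof.
  intros Hh Hnear.
  enough (- h x <= - C) by lra.
  apply (continuous_le_of_near (fun y => - h y)).
  - apply (continuous_opp h x Hh).
  - intros d Hd. destruct (Hnear d Hd) as [y [Hy HyC]]. exists y. split; [exact Hy | lra].
Qed.

Lemma locally_unit_interval x : 0 < x < 1 -> locally x (fun y => 0 < y < 1).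
Proof.
  apply (open_and (fun y => 0 < y) (fun y => y < 1)); [apply open_gt | apply open_lt].
Qed.

Lemma Rdiv_le_Rdiv_iff (A B p q : R) : 0 < p -> 0 < q -> (A / p <= B / q <-> A * q <= B * p).
Proof.
  intros Hp Hq.
  replace (A / p) with (A * q / (p * q)) by (field; lra).
  replace (B / q) with (B * p / (p * q)) by (field; lra).
  assert (0 < p * q) by nra.
  split; intros Hle.
  - apply Rmult_le_reg_r with (/ (p * q)); [apply Rinv_0_lt_compat; lra | exact Hle].
  - apply Rmult_le_compat_r; [left; apply Rinv_0_lt_compat; lra | exact Hle].
Qed.

Definition convex_on (g : R -> R) (a b : R) : Prop :=
  forall x y t, a <= x <= b -> a <= y <= b -> 0 <= t <= 1 ->
    g (t * x + (1 - t) * y) <= t * g x + (1 - t) * g y.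

Definition slope (g : R -> R) (x y : R) : R := (g y - g x) / (y - x).

Section Convexity.
Variables (g : R -> R) (a b : R).

Lemma convex_on_chord : convex_on g a b -> forall x y z, a <= x -> x < y -> y < z -> z <= b ->
  (z - x) * g y <= (z - y) * g x + (y - x) * g z.
Proof.
  intros Hg x y z Hx Hxy Hyz Hz.
  set (t := (z - y) / (z - x)).
  assert (Ht : 0 <= t <= 1).
  { unfold t; split; [apply Rdiv_le_0_compat; lra|].
    apply Rmult_le_reg_r with (z - x); [lra|]. field_simplify; lra. }
  pose proof (Hg x z t ltac:(lra) ltac:(lra) Ht) as Hc.
  replace (t * x + (1 - t) * z) with y in Hc by (unfold t; field; lra).
  apply Rmult_le_compat_l with (r := z - x) in Hc; [|lra].
  replace ((z - x) * (t * g x + (1 - t) * g z)) with ((z - y) * g x + (y - x) * g z) in Hc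
    by (unfold t; field; lra).
  exact Hc.
Qed.

Lemma convex_on_slope_le_left : convex_on g a b -> forall x y z, a <= x -> x < y -> y < z -> z <= b ->
  slope g x y <= slope g x z.
Proof.
  intros Hg x y z Hx Hxy Hyz Hz. pose proof (convex_on_chord Hg x y z Hx Hxy Hyz Hz).
  unfold slope. apply Rdiv_le_Rdiv_iff; [lra | lra | nra].
Qed.

Lemma convex_on_slope_le_right : convex_on g a b -> forall x y z, a <= x -> x < y -> y < z -> z <= b ->
  slope g x z <= slope g y z.
Proof.
  intros Hg x y z Hx Hxy Hyz Hz. pose proof (convex_on_chord Hg x y z Hx Hxy Hyz Hz).
  unfold slope. apply Rdiv_le_Rdiv_iff; [lra | lra | nra].
Qed.

Lemma convex_on_of_slope_le :
  (forall x y z, a <= x -> x < y -> y < z -> z <= b -> slope g x y <= slope g y z) ->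
  convex_on g a b.
Proof.
  intros Hs.
  assert (Hlt : forall x y t, a <= x -> x < y -> y <= b -> 0 < t < 1 ->
            g (t * x + (1 - t) * y) <= t * g x + (1 - t) * g y).
  { intros x y t Hx Hxy Hy Ht.
    set (z := t * x + (1 - t) * y).
    assert (0 < (1 - t) * (y - x)) by (apply Rmult_lt_0_compat; lra).
    assert (0 < t * (y - x)) by (apply Rmult_lt_0_compat; lra).
    assert (Hxz : x < z) by (unfold z; lra). assert (Hzy : z < y) by (unfold z; lra).
    pose proof (Hs x z y Hx Hxz Hzy Hy) as Hxzy.
    unfold slope in Hxzy. rewrite (Rdiv_le_Rdiv_iff _ _ (z - x) (y - z) ltac:(lra) ltac:(lra)) in Hxzy.
    replace (y - z) with (t * (y - x)) in Hxzy by (unfold z; ring).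
    replace (z - x) with ((1 - t) * (y - x)) in Hxzy by (unfold z; ring).
    nra. }
  intros x y t Hx Hy Ht.
  destruct (Req_dec t 0) as [->|Ht0].
  { replace (0 * x + (1 - 0) * y) with y by ring. lra. }
  destruct (Req_dec t 1) as [->|Ht1].
  { replace (1 * x + (1 - 1) * y) with x by ring. lra. }
  destruct (Rtotal_order x y) as [Hxy|[<-|Hxy]].
  - apply Hlt; lra.
  - replace (t * x + (1 - t) * x) with x by ring. lra.
  - pose proof (Hlt y x (1 - t) ltac:(lra) Hxy ltac:(lra) ltac:(lra)) as H.
    replace ((1 - t) * y + (1 - (1 - t)) * x) with (t * x + (1 - t) * y) in H by ring.
    lra.
Qed.

End Convexity.

Lemma is_RInt_gen_at_left_of_derive (h A : R -> R) (a b : R) :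
  a < b ->
  (forall x, a <= x < b -> is_derive A x (h x)) ->
  (forall x, a <= x < b -> continuous h x) ->
  continuous A b ->
  is_RInt_gen h (at_point a) (at_left b) (A b - A a).
Proof.
  intros Hab HA Hh HAb.
  assert (Hnear : filter_prod (at_point a) (at_left b) (fun uv => fst uv = a /\ a < snd uv < b)).
  { apply (Filter_prod _ _ _ (fun u => u = a) (fun v => a < v < b)).
    - reflexivity.
    - exists (mkposreal _ (proj2 (Rlt_0_minus _ _) Hab)). intros v Hv Hvb.
      change (Rabs (v - b) < b - a) in Hv. apply Rabs_def2 in Hv. lra.
    - intros u v Hu Hv. split; assumption. }
  apply (filterlimi_lim_ext_loc (fun uv => A (snd uv) - A (fst uv))).
  - revert Hnear; apply filter_imp; intros [u v] [Hu Hv]; simpl in *; subst u.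
    apply (is_RInt_derive A h); rewrite Rmin_left, Rmax_right by lra; intros x Hx.
    + apply HA; lra.
    + apply Hh; lra.
  - apply (filterlim_ext_loc (fun uv => A (snd uv) - A a)).
    { revert Hnear; apply filter_imp; intros [u v] [Hu _]; simpl in *; now subst u. }
    apply (filterlim_comp _ _ _ snd (fun v => A v - A a) _ (at_left b)).
    + apply filterlim_snd.
    + apply (filterlim_filter_le_1 (F := locally b)); [apply filter_le_within|].
      apply (continuous_minus A (fun _ => A a)); [exact HAb | apply continuous_const].
Qed.

(* [g] is given through the decreasing change of variable [q = phi w], [w] in [[a, b]], by
   [g (phi w) = k w]; [h = k' / phi'] is then dg/dq, stated as [k' = h * phi'] to avoid a
   division. *)
Section Reparametrization.
Variables (g phi phi' k h h' : R -> R) (a b : R).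
Hypothesis phi_derive : forall w, a <= w <= b -> is_derive phi w (phi' w).
Hypothesis phi'_neg : forall w, a <= w <= b -> phi' w < 0.
Hypothesis k_derive : forall w, a <= w <= b -> is_derive k w (h w * phi' w).
Hypothesis h_derive : forall w, a < w < b -> is_derive h w (h' w).
Hypothesis g_phi : forall w, a <= w <= b -> g (phi w) = k w.
Hypothesis phi_onto : forall q, phi b <= q <= phi a -> exists w, a <= w <= b /\ phi w = q.

Lemma reparam_decreasing w1 w2 : a <= w1 -> w1 < w2 -> w2 <= b -> phi w2 < phi w1.
Proof.
  intros Hw1 Hw12 Hw2.
  enough (- phi w1 < - phi w2) by lra.
  apply (incr_function_le (fun w => - phi w) a b (fun w => - phi' w)); simpl; auto.
  - intros w Ha Hb. apply (is_derive_opp phi w (phi' w)), phi_derive. lra.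
  - intros w Ha Hb. pose proof (phi'_neg w (conj Ha Hb)). lra.
Qed.

Lemma reparam_lt_inv w1 w2 : a <= w1 <= b -> a <= w2 <= b -> phi w1 < phi w2 -> w2 < w1.
Proof.
  intros Hw1 Hw2 Hphi.
  destruct (Rtotal_order w1 w2) as [Hlt|[->|Hgt]]; [|lra|exact Hgt].
  pose proof (reparam_decreasing w1 w2 ltac:(lra) Hlt ltac:(lra)). lra.
Qed.

(* Cauchy's mean value theorem for k and phi *)
Lemma slope_reparam w1 w2 : a <= w1 -> w1 < w2 -> w2 <= b ->
  exists xi, w1 < xi < w2 /\ slope g (phi w2) (phi w1) = h xi.
Proof.
  intros Hw1 Hw12 Hw2.
  set (A := phi w1 - phi w2). set (B := k w1 - k w2).
  assert (HA : 0 < A) by (pose proof (reparam_decreasing w1 w2 Hw1 Hw12 Hw2); unfold A; lra).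
  destruct (MVT_cor2 (fun w => A * k w - B * phi w) (fun w => phi' w * (A * h w - B)) w1 w2 Hw12)
    as [xi [Hmvt Hxi]].
  { intros w Hw. apply is_derive_Reals.
    replace (phi' w * (A * h w - B)) with (A * (h w * phi' w) - B * phi' w) by ring.
    apply (is_derive_minus (fun w => A * k w) (fun w => B * phi w)).
    - apply (is_derive_scal k). apply k_derive. lra.
    - apply (is_derive_scal phi). apply phi_derive. lra. }
  exists xi. split; [exact Hxi|].
  assert (Hd : phi' xi < 0) by (apply phi'_neg; lra).
  assert (Hzero : phi' xi * (A * h xi - B) * (w2 - w1) = 0)
    by (rewrite <- Hmvt; unfold A, B; ring).
  assert (HB : B = A * h xi).
  { apply Rmult_integral in Hzero as [Hz|Hz]; [|lra].
    apply Rmult_integral in Hz as [Hz|Hz]; lra. }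
  unfold slope. rewrite !g_phi by lra. fold A B. rewrite HB. field. lra.
Qed.

Lemma convex_of_reparam_slope_nonincreasing :
  (forall w1 w2, a < w1 -> w1 < w2 -> w2 < b -> h w2 <= h w1) -> convex_on g (phi b) (phi a).
Proof.
  intros Hh. apply convex_on_of_slope_le. intros x y z Hx Hxy Hyz Hz.
  destruct (phi_onto x) as [wx [Hwx <-]]; [lra|].
  destruct (phi_onto y) as [wy [Hwy <-]]; [lra|].
  destruct (phi_onto z) as [wz [Hwz <-]]; [lra|].
  pose proof (reparam_lt_inv wx wy Hwx Hwy Hxy) as Hyx.
  pose proof (reparam_lt_inv wy wz Hwy Hwz Hyz) as Hzy.
  destruct (slope_reparam wy wx) as [xi1 [Hxi1 ->]]; try lra.
  destruct (slope_reparam wz wy) as [xi2 [Hxi2 ->]]; try lra.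
  apply Hh; lra.
Qed.

Lemma reparam_slope_nonincreasing_of_convex : convex_on g (phi b) (phi a) ->
  forall w1 w2, a < w1 -> w1 < w2 -> w2 < b -> h w2 <= h w1.
Proof.
  intros Hg w1 w2 Hw1 Hw12 Hw2.
  set (wm := (w1 + w2) / 2).
  assert (Hdecr : forall u v, a <= u -> u < v -> v <= b -> phi v < phi u)
    by (intros; apply reparam_decreasing; lra).
  assert (Hphi_range : forall w, a <= w <= b -> phi b <= phi w <= phi a).
  { intros w Hw. split.
    - destruct (Req_dec w b) as [->|]; [lra|]. left; apply Hdecr; lra.
    - destruct (Req_dec w a) as [->|]; [lra|]. left; apply Hdecr; lra. }
  assert (Hcont : forall w, a < w < b -> continuous h w)
    by (intros w Hw; apply (ex_derive_continuous h); eexists; apply h_derive, Hw).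
  (* h w2 <= slope on [phi w2, phi wm] <= slope on [phi wm, phi w1] <= h w1; the outer bounds
     come from chords shrinking to an endpoint, whose slopes are values of h nearby *)
  apply Rle_trans with (slope g (phi w2) (phi wm)).
  { apply continuous_le_of_near; [apply Hcont; lra|].
    intros d Hd. set (s := w2 - Rmin d (w2 - wm) / 2).
    assert (0 < Rmin d (w2 - wm)) by (apply Rmin_pos; unfold wm; lra).
    pose proof (Rmin_l d (w2 - wm)). pose proof (Rmin_r d (w2 - wm)).
    destruct (slope_reparam s w2) as [xi [Hxi Hslope]]; try (unfold s, wm in *; lra).
    exists xi. split; [apply Rabs_def1; unfold s in *; lra|].
    rewrite <- Hslope.
    apply (convex_on_slope_le_left g (phi b) (phi a) Hg);
      try apply Hdecr; try apply Hphi_range; unfold s, wm in *; lra. }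
  apply Rle_trans with (slope g (phi wm) (phi w1)).
  { apply Rle_trans with (slope g (phi w2) (phi w1)).
    - apply (convex_on_slope_le_left g (phi b) (phi a) Hg);
        try apply Hdecr; try apply Hphi_range; unfold wm; lra.
    - apply (convex_on_slope_le_right g (phi b) (phi a) Hg);
        try apply Hdecr; try apply Hphi_range; unfold wm; lra. }
  apply continuous_ge_of_near; [apply Hcont; lra|].
  intros d Hd. set (s := w1 + Rmin d (wm - w1) / 2).
  assert (0 < Rmin d (wm - w1)) by (apply Rmin_pos; unfold wm; lra).
  pose proof (Rmin_l d (wm - w1)). pose proof (Rmin_r d (wm - w1)).
  destruct (slope_reparam w1 s) as [xi [Hxi Hslope]]; try (unfold s, wm in *; lra).
  exists xi. split; [apply Rabs_def1; unfold s in *; lra|].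
  rewrite <- Hslope.
  apply (convex_on_slope_le_right g (phi b) (phi a) Hg);
    try apply Hdecr; try apply Hphi_range; unfold s, wm in *; lra.
Qed.

Theorem convex_on_iff_reparam_derive_nonpos :
  convex_on g (phi b) (phi a) <-> (forall w, a < w < b -> h' w <= 0).
Proof.
  split.
  - intros Hg w Hw.
    apply (derive_nonpos_of_nonincreasing h a b w); [exact Hw | apply h_derive, Hw |].
    apply reparam_slope_nonincreasing_of_convex, Hg.
  - intros Hh'. apply convex_of_reparam_slope_nonincreasing.
    apply (nonincreasing_of_derive_nonpos h h'); [exact h_derive | exact Hh'].
Qed.

End Reparametrization.

Definition excess (F : R -> R) (w : R) : R := RInt (fun v => 1 - F v) w 1.

(* dCS/dq at the quality whose optimal price ratio is w *)
Definition marginal_CS (F f : R -> R) (w : R) : R :=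
  excess F w + psi F f w * (1 - F w) / Derive (psi F f) w.

Definition marginal_CS' (F f : R -> R) (w : R) : R :=
  psi F f w * f w / Derive (psi F f) w ^ 2 *
  (rfun F f w * Derive (Derive (rfun F f)) w + Derive (rfun F f) w - 1).

(* the quality whose optimal price ratio is w, by the first-order condition psi(p(q)/q) = c/q *)
Definition quality (F f : R -> R) (c w : R) : R := c / psi F f w.

Definition quality' (F f : R -> R) (c w : R) : R := - c * Derive (psi F f) w / psi F f w ^ 2.

Definition CS_of_ratio (F f : R -> R) (c w : R) : R := quality F f c w * excess F w.

Section Distribution.
Variables (F f : R -> R).
Hypothesis F_0 : forall x, x <= 0 -> F x = 0.
Hypothesis F_1 : forall x, 1 <= x -> F x = 1.
Hypothesis F_cont : forall x, continuous F x.
Hypothesis F_derive : forall x, 0 < x < 1 -> is_derive F x (f x).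
Hypothesis f_pos : forall x, 0 < x < 1 -> 0 < f x.
Hypothesis f_ex_derive : forall x, 0 < x < 1 -> ex_derive f x.
Hypothesis f_ex_derive2 : forall x, 0 < x < 1 -> ex_derive (Derive f) x.

Lemma F_increasing x y : 0 < x -> x < y -> y < 1 -> F x < F y.
Proof.
  intros Hx Hxy Hy.
  apply (incr_function F 0 1 f); simpl; auto.
  intros z Hz0 Hz1. apply f_pos. lra.
Qed.

Lemma F_le_1 x : F x <= 1.
Proof.
  destruct (Rle_lt_dec x 0) as [Hx0|Hx0]; [rewrite F_0; lra|].
  destruct (Rle_lt_dec 1 x) as [Hx1|Hx1]; [rewrite F_1; lra|].
  rewrite <- (F_1 1) by lra.
  apply continuous_ge_of_near; [apply F_cont|].
  intros d Hd. exists (1 - Rmin d (1 - x) / 2).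
  assert (0 < Rmin d (1 - x)) by (apply Rmin_pos; lra).
  pose proof (Rmin_l d (1 - x)). pose proof (Rmin_r d (1 - x)).
  split; [apply Rabs_def1; lra|].
  left. apply F_increasing; lra.
Qed.

Lemma F_lt_1 x : 0 < x < 1 -> F x < 1.
Proof.
  intros Hx. pose proof (F_le_1 ((x + 1) / 2)).
  enough (F x < F ((x + 1) / 2)) by lra.
  apply F_increasing; lra.
Qed.

Lemma is_derive_rfun x : 0 < x < 1 ->
  is_derive (rfun F f) x (-1 - (1 - F x) * Derive f x / f x ^ 2).
Proof.
  intros Hx. pose proof (f_pos x Hx). pose proof (F_derive x Hx) as HFx.
  unfold rfun. auto_derive.
  - repeat split; auto. eexists; eauto. lra.
  - change (Derive (fun y => F y) x) with (Derive F x).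
    change (Derive (fun y => f y) x) with (Derive f x).
    rewrite (is_derive_unique _ _ _ HFx). field. lra.
Qed.

Lemma ex_derive_Derive_rfun x : 0 < x < 1 -> ex_derive (Derive (rfun F f)) x.
Proof.
  intros Hx.
  apply (ex_derive_ext_loc (fun y => -1 - (1 - F y) * Derive f y / f y ^ 2)).
  - apply (filter_imp (fun y => 0 < y < 1)).
    + intros y Hy. symmetry. apply is_derive_unique, is_derive_rfun, Hy.
    + apply locally_unit_interval, Hx.
  - pose proof (f_pos x Hx). pose proof (F_derive x Hx).
    auto_derive. repeat split; auto; try (eexists; eauto; fail); try (apply f_ex_derive2; auto).
    assert (0 < f x * (f x * 1)) by nra. lra.
Qed.

Lemma is_derive_psi x : 0 < x < 1 -> is_derive (psi F f) x (1 - Derive (rfun F f) x).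
Proof.
  intros Hx. apply (is_derive_minus (fun v => v) (rfun F f)).
  - auto_derive; reflexivity.
  - apply Derive_correct. eexists. apply is_derive_rfun, Hx.
Qed.

Lemma is_derive_Derive_psi x : 0 < x < 1 ->
  is_derive (Derive (psi F f)) x (- Derive (Derive (rfun F f)) x).
Proof.
  intros Hx.
  apply (is_derive_ext_loc (fun y => 1 - Derive (rfun F f) y)).
  - apply (filter_imp (fun y => 0 < y < 1)).
    + intros y Hy. symmetry. apply is_derive_unique, is_derive_psi, Hy.
    + apply locally_unit_interval, Hx.
  - replace (- Derive (Derive (rfun F f)) x) with (0 - Derive (Derive (rfun F f)) x) by ring.
    apply (is_derive_minus (fun _ => 1) (Derive (rfun F f))).
    + auto_derive; reflexivity.
    + apply Derive_correct, ex_derive_Derive_rfun, Hx.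
Qed.

Hypothesis psi_regular : forall v, 0 < v < 1 -> psi F f v > 0 -> Derive (psi F f) v > 0.

Lemma psi_increasing x y : 0 < x -> x < y -> y < 1 -> 0 < psi F f x -> psi F f x < psi F f y.
Proof.
  intros Hx Hxy Hy Hpx.
  apply (lt_of_derive_pos_above (psi F f) (Derive (psi F f))); [exact Hxy | |].
  - intros w Hw. apply Derive_correct. eexists. apply is_derive_psi. lra.
  - intros w Hw Hpw. apply psi_regular; lra.
Qed.

Lemma psi_le_inv x y : 0 < x < 1 -> 0 < y < 1 -> 0 < psi F f x -> psi F f x <= psi F f y -> x <= y.
Proof.
  intros Hx Hy Hpx Hxy. apply Rnot_lt_le. intros Hyx.
  pose proof (psi_increasing y x ltac:(lra) Hyx ltac:(lra) ltac:(lra)). lra.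
Qed.

Lemma is_derive_excess w : is_derive (excess F) w (- (1 - F w)).
Proof.
  assert (Hcont : forall v, continuous (fun v => 1 - F v) v)
    by (intros v; apply (continuous_minus (fun _ => 1) F); [apply continuous_const | apply F_cont]).
  apply (is_derive_RInt' (fun v => 1 - F v) (excess F) w 1); [|apply Hcont].
  apply filter_forall. intros u. apply (RInt_correct (fun v => 1 - F v)), ex_RInt_continuous.
  intros v _. apply Hcont.
Qed.

Lemma excess_1 : excess F 1 = 0.
Proof. exact (RInt_point 1 (fun v => 1 - F v)). Qed.

Lemma is_derive_marginal_CS w : 0 < w < 1 -> 0 < psi F f w ->
  is_derive (marginal_CS F f) w (marginal_CS' F f w).
Proof.
  intros Hw Hpw. pose proof (psi_regular w Hw Hpw) as Hdpw. pose proof (f_pos w Hw).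
  pose proof (F_derive w Hw) as HF. pose proof (is_derive_excess w) as HG.
  pose proof (is_derive_psi w Hw) as Hpsi. pose proof (is_derive_Derive_psi w Hw) as Hpsi'.
  unfold marginal_CS. auto_derive.
  - repeat split; try (eexists; eassumption). lra.
  - replace (Derive (fun x => excess F x) w) with (- (1 - F w))
      by (symmetry; apply is_derive_unique, HG).
    replace (Derive (fun x => F x) w) with (f w) by (symmetry; apply is_derive_unique, HF).
    replace (Derive (fun x => Derive (psi F f) x) w) with (- Derive (Derive (rfun F f)) w)
      by (symmetry; apply is_derive_unique, Hpsi').
    change (Derive (fun x => psi F f x) w) with (Derive (psi F f) w).
    assert (Hr' : Derive (rfun F f) w = 1 - Derive (psi F f) w)
      by (rewrite (is_derive_unique _ _ _ Hpsi); ring).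
    unfold marginal_CS'. rewrite Hr'. unfold rfun. field. lra.
Qed.

Lemma marginal_CS'_nonpos_iff w : 0 < w < 1 -> 0 < psi F f w ->
  marginal_CS' F f w <= 0 <->
  rfun F f w * Derive (Derive (rfun F f)) w + Derive (rfun F f) w <= 1.
Proof.
  intros Hw Hpw. pose proof (psi_regular w Hw Hpw). pose proof (f_pos w Hw).
  assert (Hk : 0 < psi F f w * f w / Derive (psi F f) w ^ 2)
    by (apply Rdiv_lt_0_compat; [nra | apply pow_lt; lra]).
  unfold marginal_CS'.
  set (k := psi F f w * f w / Derive (psi F f) w ^ 2) in *.
  split; intros Hle.
  - apply Rmult_le_reg_l with k; [exact Hk|]. nra.
  - nra.
Qed.


Lemma is_derive_quality c w : 0 < w < 1 -> 0 < psi F f w ->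
  is_derive (quality F f c) w (quality' F f c w).
Proof.
  intros Hw Hpw. unfold quality, quality'.
  pose proof (is_derive_psi w Hw) as Hpsi. auto_derive.
  - split; [eexists; exact Hpsi | split; [lra | exact I]].
  - change (Derive (fun x => psi F f x) w) with (Derive (psi F f) w). field. lra.
Qed.

Lemma quality'_neg c w : 0 < c -> 0 < w < 1 -> 0 < psi F f w -> quality' F f c w < 0.
Proof.
  intros Hc Hw Hpw. pose proof (psi_regular w Hw Hpw). unfold quality'.
  enough (0 < c * Derive (psi F f) w / psi F f w ^ 2) by (unfold Rdiv in *; lra).
  apply Rdiv_lt_0_compat; [nra | apply pow_lt; lra].
Qed.

Lemma is_derive_CS_of_ratio c w : 0 < w < 1 -> 0 < psi F f w ->
  is_derive (CS_of_ratio F f c) w (marginal_CS F f w * quality' F f c w).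
Proof.
  intros Hw Hpw. pose proof (psi_regular w Hw Hpw).
  replace (marginal_CS F f w * quality' F f c w)
    with (quality' F f c w * excess F w + quality F f c w * - (1 - F w))
    by (unfold marginal_CS, quality', quality; field; lra).
  apply (is_derive_mult (quality F f c) (excess F)).
  - apply is_derive_quality; assumption.
  - apply is_derive_excess.
  - intros; apply Rmult_comm.
Qed.
Section Monopoly.
Variables (ql qh c : R) (p : R -> R).
Hypothesis q_bounds : 0 < ql < qh.
Hypothesis c_bounds : 0 < c < ql.
Hypothesis p_max : forall q, ql <= q <= qh -> forall x, profit F c q x <= profit F c q (p q).

Lemma price_ratio_bounds q : ql <= q <= qh -> 0 < p q / q < 1.
Proof.
  intros Hq. assert (Hq0 : 0 < q) by lra.
  assert (Hpos : 0 < profit F c q ((c + q) / 2)).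
  { unfold profit. apply Rmult_lt_0_compat; [lra|].
    enough (F ((c + q) / 2 / q) < 1) by lra.
    apply F_lt_1. split; [apply Rdiv_lt_0_compat; lra|].
    apply (Rdiv_lt_1 _ q); lra. }
  pose proof (p_max q Hq ((c + q) / 2)) as Hmax. unfold profit in Hpos, Hmax.
  assert (Hc : c < p q).
  { apply Rnot_le_lt. intros Hle. pose proof (F_le_1 (p q / q)).
    assert ((p q - c) * (1 - F (p q / q)) <= 0) by (apply Rmult_le_0_r; lra). lra. }
  assert (Hqp : p q < q).
  { apply Rnot_le_lt. intros Hle.
    rewrite (F_1 (p q / q)) in Hmax by (apply Rle_div_r; lra). lra. }
  split; [apply Rdiv_lt_0_compat | apply (Rdiv_lt_1 _ q)]; lra.
Qed.

Lemma psi_price_ratio q : ql <= q <= qh -> psi F f (p q / q) = c / q.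
Proof.
  intros Hq. assert (Hq0 : 0 < q) by lra.
  pose proof (price_ratio_bounds q Hq) as Hu.
  set (u := p q / q) in *.
  assert (Hpq : p q = u * q) by (unfold u; field; lra).
  pose proof (F_derive u Hu) as HF. pose proof (f_pos u Hu).
  assert (Hder : is_derive (profit F c q) (p q) ((1 - F u) - (p q - c) * f u / q)).
  { unfold profit. auto_derive.
    - eexists. exact HF.
    - replace (Derive (fun x => F x) (p q * / q)) with (f u)
        by (symmetry; apply is_derive_unique, HF).
      unfold u, Rdiv. ring. }
  pose proof (is_derive_local_max _ (p q - 1) (p q + 1) (p q) _ ltac:(lra) Hder
                (fun y _ => p_max q Hq y)) as Hfoc.
  rewrite Hpq in Hfoc.
  unfold psi, rfun.
  replace (1 - F u) with ((u * q - c) * f u / q) by lra.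
  field. lra.
Qed.

Lemma CS_price_ratio q : ql <= q <= qh -> CS f p q = q * excess F (p q / q).
Proof.
  intros Hq. assert (Hq0 : 0 < q) by lra.
  pose proof (price_ratio_bounds q Hq) as Hu.
  set (u := p q / q) in *.
  assert (Hpq : p q = u * q) by (unfold u; field; lra).
  (* integrating (v - u) f(v) by parts yields this antiderivative of the integrand *)
  set (A := fun v => q * ((v - u) * (F v - 1) - excess F v)).
  replace (q * excess F u) with (A 1 - A u) by (unfold A; rewrite F_1, excess_1 by lra; ring).
  apply is_RInt_gen_unique, is_RInt_gen_at_left_of_derive; [lra | | |].
  - intros x Hx. assert (Hx01 : 0 < x < 1) by lra.
    pose proof (F_derive x Hx01) as HF. pose proof (is_derive_excess x) as HG.
    unfold A. auto_derive.
    + split; [eexists; exact HF | split; [eexists; exact HG | exact I]].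
    + replace (Derive (fun y => F y) x) with (f x) by (symmetry; apply is_derive_unique, HF).
      replace (Derive (fun y => excess F y) x) with (- (1 - F x))
        by (symmetry; apply is_derive_unique, HG).
      rewrite Hpq. ring.
  - intros x Hx.
    apply (continuous_mult (fun v => v * q - p q) f).
    + apply (ex_derive_continuous (fun v => v * q - p q)). auto_derive. exact I.
    + apply (ex_derive_continuous f), f_ex_derive. lra.
  - unfold A. apply (continuous_mult (fun _ => q)); [apply continuous_const|].
    apply (continuous_minus (fun v => (v - u) * (F v - 1)) (excess F)).
    + apply (continuous_mult (fun v => v - u) (fun v => F v - 1)).
      * apply (continuous_minus (fun v => v) (fun _ => u));
          [apply continuous_id | apply continuous_const].
      * apply (continuous_minus F (fun _ => 1)); [apply F_cont | apply continuous_const].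
    + apply (ex_derive_continuous (excess F)). eexists. apply is_derive_excess.
Qed.

Lemma quality_price_ratio q : ql <= q <= qh -> quality F f c (p q / q) = q.
Proof.
  intros Hq. unfold quality. rewrite psi_price_ratio by exact Hq. field. lra.
Qed.

Lemma price_ratio_range w : p qh / qh <= w <= p ql / ql ->
  0 < w < 1 /\ c / qh <= psi F f w <= c / ql.
Proof.
  intros Hw.
  assert (Hh : ql <= qh <= qh) by lra. assert (Hl : ql <= ql <= qh) by lra.
  pose proof (price_ratio_bounds qh Hh). pose proof (price_ratio_bounds ql Hl).
  rewrite <- (psi_price_ratio qh Hh), <- (psi_price_ratio ql Hl).
  assert (Hc : 0 < c / qh) by (apply Rdiv_lt_0_compat; lra).
  rewrite <- (psi_price_ratio qh Hh) in Hc.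
  assert (Hlo : psi F f (p qh / qh) <= psi F f w).
  { destruct (Req_dec (p qh / qh) w) as [<-|Hne]; [lra|].
    left. apply psi_increasing; lra. }
  split; [lra|]. split; [exact Hlo|].
  destruct (Req_dec w (p ql / ql)) as [->|Hne]; [lra|].
  left. apply psi_increasing; lra.
Qed.

Lemma price_ratio_regular w : p qh / qh <= w <= p ql / ql -> 0 < w < 1 /\ 0 < psi F f w.
Proof.
  intros Hw. destruct (price_ratio_range w Hw) as [Hw01 [Hlo _]].
  split; [exact Hw01|]. pose proof (Rdiv_lt_0_compat c qh). lra.
Qed.

Lemma quality_range w : p qh / qh <= w <= p ql / ql -> ql <= quality F f c w <= qh.
Proof.
  intros Hw. destruct (price_ratio_range w Hw) as [_ [Hlo Hhi]].
  destruct (price_ratio_regular w Hw) as [_ Hpos].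
  unfold quality. split.
  - apply Rle_div_r; [lra|]. apply Rle_div_r in Hhi; lra.
  - apply Rle_div_l; [lra|]. apply Rle_div_l in Hlo; lra.
Qed.

Lemma price_ratio_between q : ql <= q <= qh -> p qh / qh <= p q / q <= p ql / ql.
Proof.
  intros Hq.
  assert (Hh : ql <= qh <= qh) by lra. assert (Hl : ql <= ql <= qh) by lra.
  pose proof (price_ratio_bounds q Hq). pose proof (price_ratio_bounds qh Hh).
  pose proof (price_ratio_bounds ql Hl).
  assert (Hc : 0 < c / qh) by (apply Rdiv_lt_0_compat; lra).
  assert (c / qh <= c / q) by (apply Rmult_le_compat_l; [lra | apply Rinv_le_contravar; lra]).
  assert (c / q <= c / ql) by (apply Rmult_le_compat_l; [lra | apply Rinv_le_contravar; lra]).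
  split; apply psi_le_inv; auto; rewrite !psi_price_ratio by assumption; lra.
Qed.

Lemma price_ratio_quality w : p qh / qh <= w <= p ql / ql ->
  p (quality F f c w) / quality F f c w = w.
Proof.
  intros Hw. pose proof (quality_range w Hw) as Hq.
  destruct (price_ratio_regular w Hw) as [Hw01 Hpw].
  pose proof (price_ratio_bounds _ Hq) as Hu.
  assert (Hpsi : psi F f (p (quality F f c w) / quality F f c w) = psi F f w).
  { rewrite psi_price_ratio by exact Hq. unfold quality. field. split; lra. }
  apply Rle_antisym; apply psi_le_inv; auto; lra.
Qed.

Lemma CS_quality w : p qh / qh <= w <= p ql / ql ->
  CS f p (quality F f c w) = CS_of_ratio F f c w.
Proof.
  intros Hw. unfold CS_of_ratio.
  rewrite CS_price_ratio by (apply quality_range, Hw).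
  now rewrite price_ratio_quality.
Qed.

Theorem CS_convex_iff :
  convex_on (CS f p) ql qh <->
  (forall v, p qh / qh < v < p ql / ql ->
     rfun F f v * Derive (Derive (rfun F f)) v + Derive (rfun F f) v <= 1).
Proof.
  pose proof price_ratio_regular as Hrange.
  set (ua := p qh / qh) in *. set (ub := p ql / ql) in *.
  assert (Hql : quality F f c ub = ql) by (apply quality_price_ratio; lra).
  assert (Hqh : quality F f c ua = qh) by (apply quality_price_ratio; lra).
  assert (Hconv : convex_on (CS f p) (quality F f c ub) (quality F f c ua) <->
                  (forall w, ua < w < ub -> marginal_CS' F f w <= 0)).
  { apply (convex_on_iff_reparam_derive_nonpos _ _ (quality' F f c) (CS_of_ratio F f c) (marginal_CS F f)).
    - intros w Hw. apply is_derive_quality; apply Hrange, Hw.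
    - intros w Hw. apply quality'_neg; [lra | apply Hrange, Hw ..].
    - intros w Hw. apply is_derive_CS_of_ratio; apply Hrange, Hw.
    - intros w Hw. apply is_derive_marginal_CS; apply Hrange; lra.
    - intros w Hw. apply CS_quality, Hw.
    - intros q Hq'. rewrite Hql, Hqh in Hq'. exists (p q / q).
      split; [apply price_ratio_between | apply quality_price_ratio]; exact Hq'. }
  rewrite Hql, Hqh in Hconv. rewrite Hconv.
  split; intros Hcond v Hv; destruct (Hrange v ltac:(lra)) as [Hv01 Hpv];
    [apply marginal_CS'_nonpos_iff | apply <- marginal_CS'_nonpos_iff]; auto.
Qed.

End Monopoly.
End Distribution.

Theorem lemma3 (ql qh c : R) (F f p : R -> R)
  (Hq : 0 < ql < qh) (Hc : 0 < c < ql)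
  (* F is a distribution function on [0,1] with density f on (0,1) *)
  (HF0 : forall x, x <= 0 -> F x = 0)
  (HF1 : forall x, 1 <= x -> F x = 1)
  (HFc : forall x, continuous F x)
  (HFd : forall x, 0 < x < 1 -> is_derive F x (f x))
  (* f > 0 on (0,1) and f is C^2 on (0,1) *)
  (Hfpos : forall x, 0 < x < 1 -> 0 < f x)
  (Hf1 : forall x, 0 < x < 1 -> ex_derive f x)
  (Hf2 : forall x, 0 < x < 1 -> ex_derive (Derive f) x)
  (Hf2c : forall x, 0 < x < 1 -> continuous (Derive (Derive f)) x)
  (* psi' > 0 wherever psi > 0 *)
  (Hpsi : forall v, 0 < v < 1 -> psi F f v > 0 -> Derive (psi F f) v > 0)
  (* p(q) is the unique maximizer over R of (p - c)(1 - F(p/q)) *)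
  (Hpmax : forall q, ql <= q <= qh ->
     forall x, profit F c q x <= profit F c q (p q))
  (Hpuniq : forall q, ql <= q <= qh ->
     forall x, profit F c q x = profit F c q (p q) -> x = p q) :
  (forall x y t, ql <= x <= qh -> ql <= y <= qh -> 0 <= t <= 1 ->
     CS f p (t * x + (1 - t) * y) <= t * CS f p x + (1 - t) * CS f p y)
  <->
  (forall v, p qh / qh < v < p ql / ql ->
     rfun F f v * Derive (Derive (rfun F f)) v + Derive (rfun F f) v <= 1).
Proof.
  eapply CS_convex_iff; eassumption.
Qed.
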